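(* Let $H$, $G$ be real Hilbert spaces, $Z$ a nonempty closed convex subset of $H\times G$, $x_0\in H\times G$, $\{\lambda_n\}\subset(0,1]$, $\{H_n\}$ closed convex sets with $Z\subset H_n$, and let $\{x_n\},\{x_{n+1/2}\}$ be generated by $x_{n+1/2}=x_n+\lambda_n(P_{H_n}(x_n)-x_n)$, $x_{n+1}=P_{H(x_0,x_n)\cap C_n}(x_0)$, where each $C_n$ is closed convex with $Z\subset C_n\subset H(x_n,x_{n+1/2})$. For $n\ge1$ let $q_n:=P_{H(x_0,x_{n-1})\cap H(x_{n-1},x_{(n-1)+1/2})}(x_0)$ and let $\bar x=P_Z(x_0)$. Then for all $n\ge1$: (i) $\|x_0-x_n\|^2\ge\|x_0-q_n\|^2+\|x_n-q_n\|^2$; (ii) $\|\bar x-x_n\|^2\le\|x_0-\bar x\|^2-\|x_0-x_n\|^2\le\|x_0-\bar x\|^2-\|x_0-q_n\|^2-\|x_n-q_n\|^2$.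
   Context: For $x,y\in H\times G$, $H(x,y):=\{h:\ \langle h-y\mid x-y\rangle\le 0\}$. $P_D$ is the metric projection onto a nonempty closed convex set $D$. *)

From mathcomp Require Import all_boot all_order all_algebra.
From mathcomp Require Import reals.
Set Implicit Arguments. Unset Strict Implicit. Unset Printing Implicit Defensive.
Import Order.TTheory GRing.Theory Num.Theory.
Local Open Scope ring_scope.

Record hilbert (R : realType) (V : lmodType R) := Hilbert {
  ip : V -> V -> R;
  ip_sym : forall x y, ip x y = ip y x;
  ip_linl : forall (a : R) x y z, ip (a *: x + y) z = a * ip x z + ip y z;
  ip_ge0 : forall x, 0 <= ip x x;
  ip_eq0 : forall x, ip x x = 0 -> x = 0;
  ip_complete : forall u : nat -> V,
    (forall e : R, 0 < e -> exists N : nat, forall m n : nat,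
        (N <= m)%N -> (N <= n)%N -> Num.sqrt (ip (u m - u n) (u m - u n)) < e) ->
    exists l : V, forall e : R, 0 < e -> exists N : nat, forall n : nat,
        (N <= n)%N -> Num.sqrt (ip (u n - l) (u n - l)) < e
}.

Section Product.
Context (R : realType) (V W : lmodType R) (hV : hilbert V) (hW : hilbert W).

Definition pip (x y : (V * W)%type) : R := ip hV x.1 y.1 + ip hW x.2 y.2.

Definition pnorm2 (x : (V * W)%type) : R := pip x x.

Definition pnorm (x : (V * W)%type) : R := Num.sqrt (pnorm2 x).

Definition pclosed (D : (V * W)%type -> Prop) : Prop :=
  forall (u : nat -> (V * W)%type) (l : (V * W)%type),
    (forall n, D (u n)) ->
    (forall e : R, 0 < e -> exists N : nat, forall n : nat,
        (N <= n)%N -> pnorm (u n - l) < e) ->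
    D l.

Definition pconvex (D : (V * W)%type -> Prop) : Prop :=
  forall x y (t : R), D x -> D y -> 0 <= t <= 1 -> D (t *: x + (1 - t) *: y).

Definition is_proj (D : (V * W)%type -> Prop) (x p : (V * W)%type) : Prop :=
  D p /\ forall d, D d -> pnorm (x - p) <= pnorm (x - d).

Definition Hhalf (x y : (V * W)%type) : (V * W)%type -> Prop :=
  fun h => pip (h - y) (x - y) <= 0.

End Product.

(* The projection p of x onto a convex set D satisfies D ⊆ H(x, p), and
   b ∈ H(a, p) means the angle at p in the triangle a p b is obtuse, so
   ‖a - p‖² + ‖b - p‖² ≤ ‖a - b‖².  For (i), x_n lies in
   H(x_0, x_{n-1}) ∩ C_{n-1}, which is contained in the convex set onto which
   q_n projects x_0, hence x_n ∈ H(x_0, q_n).  For (ii), induction on n gives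
   Z ⊆ H(x_0, x_n), since Z ⊆ H(x_0, x_n) ∩ C_n and x_{n+1} is the projection
   of x_0 onto that set; in particular x̄ ∈ H(x_0, x_n). *)
From Pilot Require Import Defs.
From mathcomp Require Import all_boot all_order all_algebra.
From mathcomp Require Import reals.
From mathcomp Require Import ring lra.
Import Order.TTheory GRing.Theory Num.Theory.
Local Open Scope ring_scope.

Section ProductHilbert.
Context {R : realType} {V W : lmodType R} {hV : hilbert V} {hW : hilbert W}.
Local Notation pip := (pip hV hW).
Local Notation pnorm2 := (pnorm2 hV hW).
Local Notation is_proj := (is_proj hV hW).
Local Notation Hhalf := (Hhalf hV hW).
Local Notation pconvex := (@pconvex R V W).
Implicit Types (x y z a b d p : (V * W)%type) (D E : (V * W)%type -> Prop).

Lemma pip_linl (t : R) x y z : pip (t *: x + y) z = t * pip x z + pip y z.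
Proof. rewrite /Defs.pip /= !ip_linl; ring. Qed.

Lemma pip_sym x y : pip x y = pip y x.
Proof. by rewrite /Defs.pip ip_sym [ip hW _ _]ip_sym. Qed.

Lemma pipD x y z : pip (x + y) z = pip x z + pip y z.
Proof. by rewrite -[x]scale1r pip_linl mul1r scale1r. Qed.

Lemma pip0 z : pip 0 z = 0.
Proof. by have := pipD 0 0 z; rewrite addr0 => h; lra. Qed.

Lemma pipZ (t : R) x z : pip (t *: x) z = t * pip x z.
Proof. by rewrite -[t *: x]addr0 pip_linl pip0 addr0. Qed.

Lemma pipN x z : pip (- x) z = - pip x z.
Proof. by rewrite -scaleN1r pipZ mulN1r. Qed.

Lemma pipB x y z : pip (x - y) z = pip x z - pip y z.
Proof. by rewrite pipD pipN. Qed.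

Lemma pnorm2_ge0 x : 0 <= pnorm2 x.
Proof. by rewrite /Defs.pnorm2 /Defs.pip addr_ge0 // ip_ge0. Qed.

Lemma pnorm2B a b : pnorm2 (a - b) = pnorm2 a - 2 * pip a b + pnorm2 b.
Proof.
rewrite /Defs.pnorm2 !pipB (pip_sym a (a - b)) (pip_sym b (a - b)) !pipB
  (pip_sym b a); ring.
Qed.

Lemma pnorm2Z (t : R) a : pnorm2 (t *: a) = t ^+ 2 * pnorm2 a.
Proof. by rewrite /Defs.pnorm2 pipZ (pip_sym a) pipZ mulrA expr2. Qed.

Lemma pconvexI D E : pconvex D -> pconvex E -> pconvex (fun h => D h /\ E h).
Proof. by move=> cD cE u v t [Du Eu] [Dv Ev] t01; split; [apply: cD | apply: cE]. Qed.

Lemma Hhalf_convex a y : pconvex (Hhalf a y).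
Proof. by move=> d p t; rewrite /Hhalf !pipB pipD !pipZ => h1 h2 /andP[t0 t1]; nra. Qed.

Lemma Hhalfxx a z : Hhalf a a z.
Proof. by rewrite /Hhalf subrr pip_sym pip0. Qed.

Lemma Hhalf_pythagoras {a p b} :
  Hhalf a p b -> pnorm2 (a - p) + pnorm2 (b - p) <= pnorm2 (a - b).
Proof.
rewrite /Hhalf => obtuse.
have -> : a - b = (a - p) - (b - p) by rewrite opprB addrA subrK.
by rewrite [pnorm2 (_ - (b - p))]pnorm2B (pip_sym (a - p)); lra.
Qed.

Lemma is_proj_pnorm2 {D x p d} : is_proj D x p -> D d -> pnorm2 (x - p) <= pnorm2 (x - d).
Proof. by move=> [_ minp] /minp; rewrite /Defs.pnorm ler_sqrt // pnorm2_ge0. Qed.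

Lemma is_proj_sub_Hhalf {D x p} :
  pconvex D -> is_proj D x p -> forall d, D d -> Hhalf x p d.
Proof.
move=> cD projp d Dd; rewrite /Hhalf.
set c := pip (d - p) (x - p); set N := pnorm2 (d - p).
have N0 : 0 <= N by exact: pnorm2_ge0.
(* first-order condition along the segment from p towards d *)
have slope t : 0 < t <= 1 -> 2 * c <= t * N.
  move=> /andP[t0 t1]; have t01 : 0 <= t <= 1 by rewrite ltW.
  have := is_proj_pnorm2 projp (cD _ _ t Dd (proj1 projp) t01).
  have -> : x - (t *: d + (1 - t) *: p) = (x - p) - t *: (d - p).
    by rewrite scalerBr scalerBl scale1r !opprD !opprK !addrA [x - _ - p]addrAC.
  rewrite [pnorm2 (_ - t *: _)]pnorm2B pnorm2Z (pip_sym (x - p)) pipZ -/c -/N expr2 => h.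
  by rewrite -(ler_pM2l t0); nra.
rewrite leNgt; apply/negP => c0.
have cN0 : 0 < c + N by lra.
have t01 : 0 < c / (c + N) <= 1.
  by rewrite divr_gt0 //= ler_pdivrMr // mul1r; lra.
have : c / (c + N) * N < c by rewrite mulrAC ltr_pdivrMr //; nra.
by have := slope _ t01; lra.
Qed.

Lemma sub_Hhalf_iter {Z : (V * W)%type -> Prop} {x0} {x : nat -> (V * W)%type}
    {C : nat -> (V * W)%type -> Prop} :
  x 0%N = x0 -> (forall n, pconvex (C n)) -> (forall n z, Z z -> C n z) ->
  (forall n, is_proj (fun h => Hhalf x0 (x n) h /\ C n h) x0 (x n.+1)) ->
  forall n z, Z z -> Hhalf x0 (x n) z.
Proof.
move=> x00 cC ZC projx; elim=> [|n IHn] z Zz; first by rewrite x00; apply: Hhalfxx.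
apply: (is_proj_sub_Hhalf _ (projx n)); last by split; [apply: IHn | apply: ZC].
by apply: pconvexI => //; apply: Hhalf_convex.
Qed.

End ProductHilbert.

Theorem proposition15 (R : realType) (V W : lmodType R)
  (hV : hilbert V) (hW : hilbert W)
  (Z : (V * W)%type -> Prop) (x0 : (V * W)%type)
  (lambda : nat -> R)
  (Hn Cn : nat -> (V * W)%type -> Prop)
  (x xh : nat -> (V * W)%type) :
  (exists z, Z z) -> pclosed hV hW Z -> pconvex Z ->
  (forall n, 0 < lambda n <= 1) ->
  (forall n, pclosed hV hW (Hn n) /\ pconvex (Hn n) /\
     (forall z, Z z -> Hn n z)) ->
  (forall n, pclosed hV hW (Cn n) /\ pconvex (Cn n) /\
     (forall z, Z z -> Cn n z) /\
     (forall h, Cn n h -> Hhalf hV hW (x n) (xh n) h)) ->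
  x 0%N = x0 ->
  (forall n, exists p, is_proj hV hW (Hn n) (x n) p /\
     xh n = x n + lambda n *: (p - x n)) ->
  (forall n, is_proj hV hW
     (fun h => Hhalf hV hW x0 (x n) h /\ Cn n h) x0 (x n.+1)) ->
  forall (n : nat), (1 <= n)%N ->
  forall q : (V * W)%type,
    is_proj hV hW
      (fun h => Hhalf hV hW x0 (x n.-1) h /\ Hhalf hV hW (x n.-1) (xh n.-1) h)
      x0 q ->
  forall xbar : (V * W)%type, is_proj hV hW Z x0 xbar ->
    pnorm2 hV hW (x0 - x n) >=
      pnorm2 hV hW (x0 - q) + pnorm2 hV hW (x n - q)
    /\ pnorm2 hV hW (xbar - x n) <=
         pnorm2 hV hW (x0 - xbar) - pnorm2 hV hW (x0 - x n)
    /\ pnorm2 hV hW (x0 - xbar) - pnorm2 hV hW (x0 - x n) <=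
         pnorm2 hV hW (x0 - xbar) - pnorm2 hV hW (x0 - q)
           - pnorm2 hV hW (x n - q).
Proof.
(* Closedness and the construction of xh only serve to guarantee that the
   projections exist, and these are given as hypotheses. *)
move=> _ _ _ _ _ setC x00 _ projx [//|m] _ q projq xbar [Zxbar _] /=.
have cC k : pconvex (Cn k) := proj1 (proj2 (setC k)).
have ZC k : forall z, Z z -> Cn k z := proj1 (proj2 (proj2 (setC k))).
have CH k : forall h, Cn k h -> Hhalf hV hW (x k) (xh k) h :=
  proj2 (proj2 (proj2 (setC k))).
have xm1_in_Hq : Hhalf hV hW x0 q (x m.+1).
  apply: (is_proj_sub_Hhalf _ projq); first by apply: pconvexI; apply: Hhalf_convex.
  by have [[? /CH ?] _] := projx m.
have xbar_in_H : Hhalf hV hW x0 (x m.+1) xbar.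
  exact: (sub_Hhalf_iter x00 cC ZC projx).
have := Hhalf_pythagoras xm1_in_Hq; have := Hhalf_pythagoras xbar_in_H.
by lra.
Qed.
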